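(* Let $X$ be a strictly convex complex Banach space and let $J:X\to X^*$ be any duality section of $X$. Let $x\in X$ be a unit vector and let $T=\{e^{tA}:t\ge 0\}$ be a $(C_0)$ contraction semigroup with generator $A$ such that \[\lim_{t\to\infty}|\langle T(t)x,J(x)\rangle| = 1.\] Then $x$ is in the domain of $A$ and $Ax=i\lambda x$ for some real number $\lambda$; i.e. $x$ is an eigenvector of $A$ corresponding to a purely imaginary eigenvalue.
   Context: For a complex Banach space $X$, a functional $x^*\in X^*$ is called dual to $x\in X$ if $\langle x,x^*\rangle = \|x^*\|\|x\| = \|x^*\|^2=\|x\|^2$. A map $J:X\to X^*$ is a duality section if $J(x)$ is dual to $x$ for every $x\in X$. $X$ is strictly convex if for any two unit vectors $x,y$, either $x=y$ or $\|x+y\|<2$. *)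

(* A complex Banach space is X : completeNormedModType R[i]; its norm `|x| takes values
   in R[i] (real, nonnegative values), as is standard for normedModType over R[i]. *)
From HB Require Import structures.
From mathcomp Require Import all_boot all_order all_algebra.
From mathcomp Require Import all_classical all_reals all_analysis.
From mathcomp Require Import complex.
Set Implicit Arguments. Unset Strict Implicit. Unset Printing Implicit Defensive.
Import Order.TTheory GRing.Theory Num.Theory.
Import numFieldNormedType.Exports.
Local Open Scope ring_scope.
Local Open Scope complex_scope.
Local Open Scope classical_set_scope.

(* Equip the complex numbers R[i] with their standard (norm) topology,
   as mathcomp-analysis does for any numFieldType via R^o. *)
HB.instance Definition _ (R : realType) := NormedModule.copy R[i] R[i]^o.

Section Defs.
Variables (R : realType) (X : completeNormedModType R[i]).

Definition strictly_convex : Prop :=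
  forall x y : X, `|x| = 1 -> `|y| = 1 -> x = y \/ `|x + y| < 2.

Definition in_dual (f : X -> R[i]) : Prop :=
  (forall (a : R[i]) (u v : X), f (a *: u + v) = a * f u + f v) /\ continuous f.

Definition dual_norm_is (f : X -> R[i]) (c : R[i]) : Prop :=
  0 <= c /\ (forall y, `|f y| <= c * `|y|) /\
  (forall c', 0 <= c' -> (forall y, `|f y| <= c' * `|y|) -> c <= c').

Definition dual_to (x : X) (xs : X -> R[i]) : Prop :=
  in_dual xs /\ exists c, dual_norm_is xs c /\
    xs x = c * `|x| /\ c * `|x| = c ^+ 2 /\ c ^+ 2 = `|x| ^+ 2.

Definition duality_section (J : X -> X -> R[i]) : Prop :=
  forall x, dual_to x (J x).

Definition C0_contraction_semigroup (T : R -> X -> X) : Prop :=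
  [/\ (forall t, 0 <= t -> forall (a : R[i]) (u v : X), T t (a *: u + v) = a *: T t u + T t v),
      (forall y, T 0 y = y),
      (forall s t, 0 <= s -> 0 <= t -> forall y, T (s + t) y = T s (T t y)),
      (forall y, T t y @[t --> 0^'+] --> y) &
      (forall t, 0 <= t -> forall y, `|T t y| <= `|y|)].

Definition generator (T : R -> X -> X) (x y : X) : Prop :=
  (h^-1)%:C *: (T h x - x) @[h --> 0^'+] --> y.

Definition generator_domain (T : R -> X -> X) (x : X) : Prop :=
  exists y, generator T x y.

End Defs.

(* Let phi := J x, a functional of norm 1 with phi x = 1.  As t |-> `|T t x| is
   nonincreasing and `|phi (T t x)| tends to 1, the orbit of x stays on the unit
   sphere.  Aligning the phases of phi (T t x) and phi (T (t + s) x) for large t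
   shows that the supremum of `|x + b *: T s x| over unimodular b is 2; it is
   attained by compactness of the circle, so strict convexity gives
   T s x = c s *: x with c s := phi (T s x).  Then c is unimodular, multiplicative
   and tends to 1 at 0+, so near 0 its argument asin (Im c) is a bounded additive
   function, hence linear: c h = cos (lam h) + i sin (lam h), and A x = i lam x. *)

From HB Require Import structures.
From mathcomp Require Import all_boot all_order all_algebra.
From mathcomp Require Import all_classical all_reals all_analysis.
From mathcomp Require Import complex.
From mathcomp Require Import ring lra.
Set Implicit Arguments.
Unset Strict Implicit.
Unset Printing Implicit Defensive.

Import Order.TTheory GRing.Theory Num.Theory.
Import numFieldNormedType.Exports.
Local Open Scope ring_scope.
Local Open Scope complex_scope.
Local Open Scope classical_set_scope.

Local Notation Re := complex.Re.
Local Notation Im := complex.Im.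

Section ComplexFacts.
Variable R : realType.
Implicit Types (z w : R[i]) (k : R).

Lemma normr_RRe (V : normedModType R[i]) (y : V) : `|y| = (Re `|y|)%:C.
Proof. by rewrite RRe_real // normr_real. Qed.

Lemma normc_real k : `|k%:C| = `|k|%:C.
Proof. by rewrite normc_def /= expr0n addr0 sqrtr_sqr. Qed.

Lemma normc_ge_Im z : `|Im z|%:C <= `|z|.
Proof.
by rewrite normc_def lecR -sqrtr_sqr; apply: ler_wsqrtr; rewrite lerDr sqr_ge0.
Qed.

Lemma normc_le_ReIm z : `|z| <= (`|Re z| + `|Im z|)%:C.
Proof.
rewrite [X in `|X|]complexE rmorphD /=.
apply: (le_trans (ler_normD _ _)); apply: lerD; first by rewrite normc_real.
by rewrite normrM normc_real normc_def /= expr0n add0r expr1n sqrtr1 mul1r.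
Qed.

Lemma normc1_sqr z : `|z| = 1 -> Re z ^+ 2 + Im z ^+ 2 = 1.
Proof. by move=> z1; apply: (@complexI R); rewrite add_Re2_Im2 z1 expr1n. Qed.

Lemma normc_Re_normrB (V : normedModType R[i]) (u w : V) :
  `|Re `|u| - Re `|w| |%:C = `| `|u| - `|w| |.
Proof. by rewrite -normc_real rmorphB /= -!normr_RRe. Qed.

End ComplexFacts.

Definition cis {R : realType} (t : R) : R[i] := cos t +i* sin t.

Section Cis.
Variable R : realType.
Implicit Types (s t : R) (z : R[i]).

Lemma cisD s t : cis (s + t) = cis s * cis t.
Proof. by apply/eqP; rewrite eq_complex /= sinD cosD; apply/andP; split; apply/eqP; ring. Qed.

Lemma normr_cis t : `|cis t| = 1.
Proof. by rewrite normc_def /= sin2cos2 addrC subrK sqrtr1. Qed.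

Lemma normc1_cis z : `|z| = 1 -> exists2 t, - pi <= t <= pi & z = cis t.
Proof.
move=> /normc1_sqr; case: z => u v /= uv.
have uI : -1 <= u <= 1 by apply/andP; split; nra.
have sqrtv : Num.sqrt (1 - u ^+ 2) = `|v| by rewrite -sqrtr_sqr; congr Num.sqrt; lra.
have [a0 api] := (acos_ge0 uI, acos_lepi uI).
have [v0|v0] := leP 0 v.
- exists (acos u); first by apply/andP; split; lra.
  by rewrite /cis acosK ?in_itv // sin_acos // sqrtv ger0_norm.
- exists (- acos u); first by apply/andP; split; lra.
  by rewrite /cis cosN sinN acosK ?in_itv // sin_acos // sqrtv ltr0_norm ?opprK.
Qed.

End Cis.

Section UnitPhaseMax.
Variables (R : realType) (V : normedModType R[i]) (x a : V).
Hypothesis a1 : `|a| = 1.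

Lemma continuous_Re_norm_cisZ : continuous (fun t : R => Re `|x + cis t *: a|).
Proof.
move=> t0; apply/cvgrPdist_lt => e e0.
have e2 : 0 < e / 2 by lra.
near=> t.
have near_cos : `|cos t0 - cos t| < e / 2.
  by near: t; exact: (cvgr_dist_lt _ _ (@continuous_cos R t0) _ e2).
have near_sin : `|sin t0 - sin t| < e / 2.
  by near: t; exact: (cvgr_dist_lt _ _ (@continuous_sin R t0) _ e2).
suff : `|Re `|x + cis t0 *: a| - Re `|x + cis t *: a| |%:C
    <= (`|cos t0 - cos t| + `|sin t0 - sin t|)%:C by rewrite lecR; lra.
rewrite normc_Re_normrB; apply: le_trans (ler_dist_dist _ _) _.
rewrite opprD addrA [x + _ - x]addrC addrA addNr add0r -scalerBl normrZ a1 mulr1.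
exact: normc_le_ReIm.
Unshelve. all: by end_near.
Qed.

Lemma Re_norm_cisZ_max : exists2 b : R[i], `|b| = 1 &
  forall b', `|b'| = 1 -> Re `|x + b' *: a| <= Re `|x + b *: a|.
Proof.
have pi0 : - pi <= (pi : R) by have := pi_ge0 R; lra.
have [t0 _ max_t0] := EVT_max pi0 (continuous_subspaceT continuous_Re_norm_cisZ).
exists (cis t0); first exact: normr_cis.
by move=> _ /normc1_cis[t tI ->]; apply: max_t0; rewrite in_itv.
Qed.

End UnitPhaseMax.

Lemma strictly_convex_collinear (R : realType) (X : completeNormedModType R[i])
    (x a : X) :
  strictly_convex X -> `|x| = 1 -> `|a| = 1 ->
  (forall e : R, 0 < e -> exists2 b : R[i], `|b| = 1 & 2 - e <= Re `|x + b *: a|) ->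
  exists g : R[i], a = g *: x.
Proof.
move=> SC x1 a1 near2.
have [b b1 bmax] := Re_norm_cisZ_max x a1.
have two_le : 2 <= Re `|x + b *: a|.
  rewrite leNgt; apply/negP => lt2.
  have e0 : 0 < (2 - Re `|x + b *: a|) / 2 by lra.
  have [b' b'1 hb'] := near2 _ e0.
  by have := bmax b' b'1; lra.
have ba1 : `|b *: a| = 1 by rewrite normrZ b1 a1 mulr1.
have [xE|] := SC x (b *: a) x1 ba1.
- exists b^-1; rewrite xE scalerA mulVf ?scale1r //.
  by rewrite -normr_eq0 b1 oner_eq0.
- by rewrite normr_RRe -(rmorph_nat (real_complex R)) ltcR ltNge two_le.
Qed.

Lemma dual_to_unit (R : realType) (X : completeNormedModType R[i]) (x : X)
    (phi : X -> R[i]) :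
  dual_to x phi -> `|x| = 1 ->
  [/\ phi x = 1, forall y, `|phi y| <= `|y| & linear (phi : X -> R[i]^o)].
Proof.
move=> [[phi_lin _] [c [[_ [phi_le _]] [phixE [cE c2E]]]]] x1.
rewrite x1 mulr1 in phixE cE; rewrite x1 expr1n in c2E.
have c1 : c = 1 by rewrite cE c2E.
split=> [|y|//]; first by rewrite phixE c1.
by rewrite -[`|y|]mul1r -c1.
Qed.

Definition phase {R : rcfType} (z : R[i]) : R[i] := if z == 0 then 1 else z / `|z|.

Lemma normr_phase {R : rcfType} (z : R[i]) : `|phase z| = 1.
Proof.
rewrite /phase; case: eqP => [_|/eqP z0]; first exact: normr1.
by rewrite normrM normfV normr_id mulfV // normr_eq0.
Qed.

Lemma phaseM_normr {R : rcfType} (z : R[i]) : phase z * `|z| = z.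
Proof.
rewrite /phase; case: eqP => [->|/eqP z0]; first by rewrite normr0 mulr0.
by rewrite divfK // normr_eq0.
Qed.

Lemma linear_phase_align (R : realType) (X : normedModType R[i]) (phi : X -> R[i])
    (u w : X) :
  linear (phi : X -> R[i]^o) -> (forall y, `|phi y| <= `|y|) ->
  exists2 b : R[i], `|b| = 1 & `|phi u| + `|phi w| <= `|u + b *: w|.
Proof.
move=> phi_lin phi_le.
set pu := phase (phi u); set pw := phase (phi w).
exists (pu * Num.conj pw); first by rewrite normrM norm_conjC !normr_phase mulr1.
have pw1 : Num.conj pw * pw = 1 by rewrite mulrC -normCK normr_phase expr1n.
have E : phi (u + (pu * Num.conj pw) *: w) = pu * (`|phi u| + `|phi w|).
  rewrite (GRing.semilinear_linear phi_lin).2 (GRing.scalable_linear phi_lin) /=.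
  rewrite -[phi u in LHS]phaseM_normr -[phi w in LHS]phaseM_normr -/pu -/pw.
  by rewrite mulrDr -[_ *: _]/(_ * _) -mulrA [Num.conj pw * _]mulrA pw1 mul1r.
apply: le_trans (phi_le _); rewrite E normrM normr_phase mul1r.
by rewrite ger0_norm // addr_ge0.
Qed.

Section BoundedAdditive.
Variables (R : archiRealFieldType) (f : R -> R) (d M : R).
Hypotheses (d0 : 0 < d)
  (fD : forall a b, 0 <= a -> 0 <= b -> a + b <= d -> f (a + b) = f a + f b)
  (f_bound : forall h, 0 <= h <= d -> `|f h| <= M).

Lemma additive0 : f 0 = 0.
Proof.
have := fD (lexx 0) (lexx 0); rewrite addr0 => /(_ (ltW d0)) f00.
by apply: (addrI (f 0)); rewrite -f00 addr0.
Qed.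

Lemma additive_natmul n s : 0 <= s -> n%:R * s <= d -> f (n%:R * s) = n%:R * f s.
Proof.
move=> s0; elim: n => [|n IH] nsd; first by rewrite !mul0r additive0.
have nsd' : n%:R * s + s <= d by rewrite -[X in _ + X]mul1r -mulrDl natr1.
rewrite -natr1 mulrDl mul1r fD ?mulr_ge0 // ?IH ?mulrDl ?mul1r //.
by apply: le_trans nsd'; rewrite lerDl.
Qed.

Hypothesis fd : f d = 0.

(* f vanishes at the multiples of q := d / N, so f h = f r for some 0 <= r < q,
   and then N * `|f r| = `|f (N * r)| <= M. *)
Lemma additive_period_bound N h : (0 < N)%N -> 0 <= h <= d -> `|f h| <= M / N%:R.
Proof.
move=> N0 /andP[h0 hd].
have N0' : (0 : R) < N%:R by rewrite ltr0n.
set q := d / N%:R.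
have q0 : 0 < q by apply: divr_gt0.
have Nq : N%:R * q = d by rewrite /q mulrC divfK // gt_eqF.
have fq : f q = 0.
  have := @additive_natmul N q (ltW q0); rewrite Nq fd => /(_ (lexx _)) /esym /eqP.
  by rewrite mulf_eq0 (gt_eqF N0') => /eqP.
have /andP[kq_le kq_gt] := truncn_itv (divr_ge0 h0 (ltW q0)).
set k := Num.trunc (h / q) in kq_le kq_gt.
rewrite ler_pdivlMr // in kq_le; rewrite ltr_pdivrMr // -natr1 mulrDl mul1r in kq_gt.
set r := h - k%:R * q.
have [r0 rq] : 0 <= r /\ r < q by rewrite /r; split; lra.
have kq0 : 0 <= k%:R * q by rewrite mulr_ge0 // ltW.
have fhr : f h = f r.
  have -> : h = k%:R * q + r by rewrite /r addrC subrK.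
  by rewrite fD ?additive_natmul ?fq ?mulr0 ?add0r //; rewrite /r; lra.
have Nr : N%:R * r <= d by rewrite -Nq ltW // ltr_pM2l.
have := @f_bound (N%:R * r); rewrite additive_natmul // normrM (ger0_norm (ltW N0')) -fhr.
rewrite ler_pdivlMr // [_ * N%:R]mulrC; apply.
by rewrite Nr andbT mulr_ge0 // ltW.
Qed.

Lemma additive_bounded_eq0 h : 0 <= h <= d -> f h = 0.
Proof.
move=> hd; apply/eqP; rewrite -normr_eq0; apply/negP => /negP fh0.
have fh_gt0 : 0 < `|f h| by rewrite lt_def fh0 normr_ge0.
have M0 : 0 <= M by apply: le_trans (f_bound hd).
have /andP[_ lt_k] := truncn_itv (divr_ge0 M0 (ltW fh_gt0)).
have := additive_period_bound (ltn0Sn (Num.trunc (M / `|f h|))) hd.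
rewrite ler_pdivlMr ?ltr0n // => le_M.
by move: lt_k; rewrite ltr_pdivrMr // mulrC ltNge le_M.
Qed.

End BoundedAdditive.

Lemma additive_bounded_linear (R : archiRealFieldType) (f : R -> R) (d M : R) :
  0 < d ->
  (forall a b, 0 <= a -> 0 <= b -> a + b <= d -> f (a + b) = f a + f b) ->
  (forall h, 0 <= h <= d -> `|f h| <= M) ->
  forall h, 0 <= h <= d -> f h = f d / d * h.
Proof.
move=> d0 fD f_bound h hd.
pose g h := f h - f d / d * h.
have gD a b : 0 <= a -> 0 <= b -> a + b <= d -> g (a + b) = g a + g b.
  by move=> a0 b0 abd; rewrite /g fD //; ring.
have g_bound h' : 0 <= h' <= d -> `|g h'| <= M + `|f d|.
  move=> /andP[h'0 h'd]; apply: le_trans (ler_normB _ _) _.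
  have dV0 : 0 < d^-1 by rewrite invr_gt0.
  rewrite lerD ?f_bound ?h'0 // !normrM (ger0_norm h'0) (gtr0_norm dV0) -mulrA.
  by rewrite ler_piMr // mulrC ler_pdivrMr // mul1r.
have gd : g d = 0 by rewrite /g divfK ?subrr // gt_eqF.
by have := additive_bounded_eq0 d0 gD g_bound gd hd; rewrite /g => /eqP; rewrite subr_eq0 => /eqP.
Qed.

Section CisAsin.
Variable R : realType.

Lemma cis_asin (z : R[i]) : `|z| = 1 -> 0 < Re z -> cis (asin (Im z)) = z.
Proof.
move=> /normc1_sqr z1 Rez; have zI : -1 <= Im z <= 1 by apply/andP; split; nra.
rewrite /cis asinK ?in_itv // cos_asin //.
have -> : 1 - Im z ^+ 2 = Re z ^+ 2 by lra.
by rewrite sqrtr_sqr gtr0_norm //; case: z {z1 zI Rez}.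
Qed.

Lemma asin_small (e : R) : 0 < e ->
  exists2 r : R, 0 < r & forall y, `|y| < r -> `|asin y| < e.
Proof.
move=> e0; have asin0 : asin (0 : R) = 0.
  by rewrite -{1}sin0 sinK // in_itv /=; have := pi_gt0 R; lra.
have asin_cont : {for 0, continuous (@asin R)}.
  by apply: continuous_asin; apply/andP; split; lra.
have := @cvgr_dist_lt _ _ _ (nbhs (0 : R)) (nbhs_filter 0) _ _ asin_cont _ e0.
move=> /nbhs_normP[r /= r0 near_asin].
exists r => // y ry; have := near_asin y; rewrite /= !sub0r !normrN asin0 sub0r normrN.
exact.
Qed.

End CisAsin.

Section UnitCharacter.
Variables (R : realType) (c : R -> R[i]).
Hypotheses (c_norm1 : forall s, 0 <= s -> `|c s| = 1)
  (cD : forall s t, 0 <= s -> 0 <= t -> c (s + t) = c s * c t)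
  (c_cvg0 : c h @[h --> 0^'+] --> (1 : R[i])).

Lemma character0 : c 0 = 1.
Proof.
have c0_neq0 : c 0 != 0 by rewrite -normr_eq0 c_norm1 ?oner_eq0.
by apply: (mulfI c0_neq0); rewrite mulr1 -cD ?addr0.
Qed.

Lemma character_near1 (e : R) : 0 < e ->
  exists2 d : R, 0 < d & forall h, 0 <= h <= d -> `|1 - c h| < e%:C.
Proof.
move=> e0; have eC : (0 : R[i]) < e%:C by rewrite ltcR.
have := @cvgr_dist_lt _ _ _ _ (at_right_proper_filter 0) _ _ c_cvg0 _ eC.
rewrite near_withinE => /nbhs_normP[r /= r0 near_c].
exists (r / 2) => [|h /andP[h0 hr]]; first by lra.
have [->|h_neq0] := eqVneq h 0; first by rewrite character0 subrr normr0.
apply: near_c; last by rewrite lt_def h_neq0.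
by rewrite /= sub0r normrN ger0_norm //; lra.
Qed.

Lemma character_cis : exists lam : R, \forall h \near 0^'+, c h = cis (lam * h).
Proof.
have pi0 : (0 : R) < pi := pi_gt0 R.
(* |theta| < pi/4 keeps sums of two arguments in [-pi/2, pi/2], where asin inverts sin. *)
have pi4 : 0 < pi / 4 :> R by lra.
have [r r0 asin_lt] := asin_small pi4.
have r1 : 0 < Num.min r 1 by rewrite lt_min r0 ltr01.
have [d d0 near1] := character_near1 r1.
have th_cis h : 0 <= h <= d ->
    `|asin (Im (c h))| < pi / 4 /\ cis (asin (Im (c h))) = c h.
  move=> hd; have h0 : 0 <= h by case/andP: hd.
  have := le_lt_trans (normc_ge_Re (1 - c h)) (near1 _ hd).
  have := le_lt_trans (normc_ge_Im (1 - c h)) (near1 _ hd).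
  have := c_norm1 h0; have := cis_asin (c_norm1 h0).
  case: (c h) => a b /= cisE ab1; rewrite !ltcR !lt_min add0r normrN.
  move=> /andP[br _] /andP[_ a1]; split; first exact: asin_lt.
  by apply: cisE; move: a1; rewrite ltr_norml; lra.
pose th h := asin (Im (c h)).
have thD a b : 0 <= a -> 0 <= b -> a + b <= d -> th (a + b) = th a + th b.
  move=> a0 b0 abd.
  have [ha hb] : 0 <= a <= d /\ 0 <= b <= d by split; apply/andP; split; lra.
  rewrite /th cD //; set ta := asin (Im (c a)); set tb := asin (Im (c b)).
  have [[ta_lt taE] [tb_lt tbE]] := (th_cis a ha, th_cis b hb).
  rewrite -taE -tbE -cisD /= sinK // in_itv /=.
  by move: ta_lt tb_lt; rewrite !ltr_norml => /andP[? ?] /andP[? ?]; apply/andP; split; lra.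
have th_lin := additive_bounded_linear d0 thD (fun h hd => ltW (th_cis h hd).1).
exists (th d / d); near=> h.
have h0 : 0 < h by near: h; exact: nbhs_right_gt.
have hd : 0 <= h <= d by rewrite (ltW h0); near: h; exact: nbhs_right_le.
by rewrite -(th_cis h hd).2 -th_lin.
Unshelve. all: by end_near.
Qed.

End UnitCharacter.

Lemma dilated_difference_quotient (R : realType) (f : R -> R) (d l : R) :
  is_derive (0 : R) (1 : R) f d -> h^-1 * (f (l * h) - f 0) @[h --> 0^'] --> l * d.
Proof.
move=> fd.
have df : differentiable f 0 by apply/derivable1_diffP; exact: ex_derive.
have dl : derivable f 0 l by apply: diff_derivable.
have <- : 'D_l f 0 = l * d.
  rewrite deriveE // -[l in LHS]mulr1 -[l * 1]/(l *: (1 : R)) linearZ /=.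
  by rewrite -deriveE // derive_val.
have -> : (fun h => h^-1 * (f (l * h) - f 0)) =
    (fun h => h^-1 *: ((f \o shift 0) (h *: l) - f 0)).
  apply: funext => h /=; rewrite addr0 -[h *: l]/(h * l) -[h^-1 *: _]/(h^-1 * _).
  by rewrite [h * l]mulrC.
exact: cvg_trans dl.
Qed.

Lemma cis_right_quotient (R : realType) (lam : R) :
  (h^-1)%:C * (cis (lam * h) - 1) @[h --> 0^'+] --> lam%:C * 'i.
Proof.
have := dilated_difference_quotient (l := lam) (is_derive_cos (0 : R)).
rewrite sin0 oppr0 mulr0 cos0 => /cvg_dnbhs_at_right cos_quot.
have := dilated_difference_quotient (l := lam) (is_derive_sin (0 : R)).
rewrite cos0 mulr1 sin0 => /cvg_dnbhs_at_right sin_quot.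
apply/cvgrPdist_lt => e e0.
have eE : e = (Re e)%:C by rewrite RRe_real // gtr0_real.
have e2 : 0 < Re e / 2 by move: e0; rewrite eE ltcR; lra.
near=> h.
have cos_lt : `|0 - h^-1 * (cos (lam * h) - 1)| < Re e / 2.
  by near: h; exact: (cvgr_dist_lt _ _ cos_quot _ e2).
have sin_lt : `|lam - h^-1 * (sin (lam * h) - 0)| < Re e / 2.
  by near: h; exact: (cvgr_dist_lt _ _ sin_quot _ e2).
have -> : lam%:C * 'i - (h^-1)%:C * (cis (lam * h) - 1) =
    (0 - h^-1 * (cos (lam * h) - 1)) +i* (lam - h^-1 * (sin (lam * h) - 0)).
  by apply/eqP; rewrite eq_complex /=; apply/andP; split; apply/eqP; ring.
by apply: le_lt_trans (normc_le_ReIm _) _; rewrite eE ltcR /=; lra.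
Unshelve. all: by end_near.
Qed.

Section ContractionOrbit.
Variables (R : realType) (X : completeNormedModType R[i]).
Variables (T : R -> X -> X) (phi : X -> R[i]) (x : X).
Hypotheses (T_lin : forall t, 0 <= t -> linear (T t))
  (T_mul : forall s t, 0 <= s -> 0 <= t -> forall y, T (s + t) y = T s (T t y))
  (T_contr : forall t, 0 <= t -> forall y, `|T t y| <= `|y|).
Hypotheses (phi_lin : linear (phi : X -> R[i]^o))
  (phi_le : forall y, `|phi y| <= `|y|) (phi_x : phi x = 1) (x1 : `|x| = 1).
Hypothesis phiT_cvg : `|phi (T t x)| @[t --> +oo] --> (1 : R[i]).

Lemma phiT_shift_le {s t} y : 0 <= s -> 0 <= t -> `|phi (T (s + t) y)| <= `|T t y|.
Proof. by move=> s0 t0; rewrite T_mul //; apply: le_trans (phi_le _) (T_contr s0 _). Qed.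

Lemma contraction_orbit_norm1 t : 0 <= t -> `|T t x| = 1.
Proof.
move=> t0; have le1 : `|T t x| <= 1 by rewrite -x1 T_contr.
apply/eqP; rewrite eq_le le1 /=.
rewrite real_leNgt ?real1 ?normr_real //; apply/negP => lt1.
have gap : 0 < 1 - `|T t x| by rewrite subr_gt0.
have [s ts near1] := pinfty_ex_ge (num_real t) (cvgr_dist_lt _ _ phiT_cvg _ gap).
have ts' : 0 <= s - t by rewrite subr_ge0.
have := phiT_shift_le x ts' t0; rewrite subrK.
have := real_ltr_distlBl (rpredB (real1 _) (normr_real _)) near1.
by rewrite opprB addrC subrK => /lt_le_trans/[apply]; rewrite ltxx.
Qed.

Hypothesis SC : strictly_convex X.

Lemma contraction_orbit_collinear s : 0 <= s -> exists g, T s x = g *: x.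
Proof.
move=> s0; apply: strictly_convex_collinear => //; first exact: contraction_orbit_norm1.
move=> e e0.
have e2 : (0 : R[i]) < (e / 2)%:C by rewrite ltcR; lra.
have [t0 [_ near1]] := cvgr_dist_lt _ _ phiT_cvg _ e2.
have near1_Re t : t0 < t -> 1 - e / 2 < Re `|phi (T t x)|.
  move=> tt0; have := real_ltr_distlBl (rpredB (real1 _) (normr_real _)) (near1 t tt0).
  by rewrite normr_RRe -(rmorph1 (real_complex R)) -rmorphB ltcR.
have [t [t0t t0st t0']] : exists t : R, [/\ t0 < t, t0 < t + s & 0 <= t].
  by exists (`|t0| + 1); have := ler_norm t0; have := normr_ge0 t0; split; lra.
have [b b1 align] := linear_phase_align (T t x) (T t (T s x)) phi_lin phi_le.
exists b => //.
have contr : `|T t x + b *: T t (T s x)| <= `|x + b *: T s x|.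
  by rewrite -(GRing.scalable_linear (T_lin t0')) -(GRing.semilinear_linear (T_lin t0')).2 T_contr.
have := le_trans align contr.
rewrite -T_mul // (normr_RRe (phi (T t x))) (normr_RRe (phi (T (t + s) x))).
rewrite [X in _ <= X]normr_RRe -rmorphD lecR.
by have := near1_Re _ t0t; have := near1_Re _ t0st; lra.
Qed.

Lemma contraction_orbit_scale s : 0 <= s -> T s x = phi (T s x) *: x.
Proof.
move=> s0; have [g ->] := contraction_orbit_collinear s0.
have phiZ : phi (g *: x) = g * phi x := GRing.scalable_linear phi_lin g x.
by rewrite phiZ phi_x mulr1.
Qed.

Lemma orbit_character_norm1 s : 0 <= s -> `|phi (T s x)| = 1.
Proof.
move=> s0; have := contraction_orbit_norm1 s0.
by rewrite {1}contraction_orbit_scale // normrZ x1 mulr1.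
Qed.

Lemma orbit_characterD s t : 0 <= s -> 0 <= t ->
  phi (T (s + t) x) = phi (T s x) * phi (T t x).
Proof.
move=> s0 t0; rewrite T_mul // {1}(contraction_orbit_scale t0).
by rewrite (GRing.scalable_linear (T_lin s0)) (GRing.scalable_linear phi_lin) mulrC.
Qed.

Hypothesis T_cvg0 : T h x @[h --> 0^'+] --> x.

Lemma orbit_character_cvg0 : phi (T h x) @[h --> 0^'+] --> (1 : R[i]).
Proof.
apply/cvgrPdist_lt => e e0; near=> h.
rewrite -phi_x -(GRing.zmod_morphism_linear phi_lin); apply: le_lt_trans (phi_le _) _.
by near: h; exact: (cvgr_dist_lt _ _ T_cvg0 _ e0).
Unshelve. all: by end_near.
Qed.

Lemma contraction_orbit_cis :
  exists lam : R, \forall h \near 0^'+, T h x = cis (lam * h) *: x.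
Proof.
have [lam cisE] := character_cis orbit_character_norm1 orbit_characterD orbit_character_cvg0.
exists lam; near=> h.
have h0 : 0 < h by near: h; exact: nbhs_right_gt.
by rewrite contraction_orbit_scale ?ltW //; congr (_ *: _); near: h.
Unshelve. all: by end_near.
Qed.

End ContractionOrbit.

Theorem theorem3 (R : realType) (X : completeNormedModType R[i])
  (J : X -> X -> R[i]) (T : R -> X -> X) (x : X) :
  strictly_convex X -> duality_section J -> `|x| = 1 ->
  C0_contraction_semigroup T ->
  `|J x (T t x)| @[t --> +oo] --> (1 : R[i]) ->
  generator_domain T x /\ exists lambda : R, generator T x ((lambda%:C * 'i) *: x).
Proof.
move=> SC DJ x1 [T_lin _ T_mul T_cvg0 T_contr] phiT_cvg.
have [phi_x phi_le phi_lin] := dual_to_unit (DJ x) x1.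
have [lam Tx] := contraction_orbit_cis T_lin T_mul T_contr phi_lin phi_le phi_x x1
  phiT_cvg SC (T_cvg0 x).
have gen : generator T x ((lam%:C * 'i) *: x).
  have quotE : {near 0^'+, (fun h => ((h^-1)%:C * (cis (lam * h) - 1)) *: x) =1
      (fun h => (h^-1)%:C *: (T h x - x))}.
    by apply: filterS Tx => h /= ->; rewrite -scalerA scalerBl scale1r.
  apply: cvg_trans (near_eq_cvg quotE) _.
  apply: cvgZr_tmp; exact: cis_right_quotient.
by split; [exists ((lam%:C * 'i) *: x) | exists lam].
Qed.
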